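(* Let $n_1,\dots,n_\ell$ be integers with $\prod_{i=1}^\ell n_i = n$, and let $A \in \{0,1\}^{n\times n}$ with $A \neq 0$. If there exist matrices $A_i \in \{0,1\}^{n_i\times n_i}$, $i=1,\dots,\ell$, with $A = A_1\otimes A_2\otimes\cdots\otimes A_\ell$, then these matrices are unique: if also $A = \hat A_1\otimes\cdots\otimes \hat A_\ell$ with $\hat A_i\in\{0,1\}^{n_i\times n_i}$, then $\hat A_i = A_i$ for all $i$.
   Context: Binary matrices have entries in $\{0,1\}$ and all arithmetic (in particular inside Kronecker products) uses Boolean addition ($1+1=1$) and multiplication. An $(n_1,\dots,n_\ell)$ factorization of $A$ is an expression $A=A_1\otimes\cdots\otimes A_\ell$ with $A_i\in\{0,1\}^{n_i\times n_i}$. *)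

(* Binary (Boolean) matrices are matrices over bool; the
   Boolean product of two entries is (&&), so the Kronecker product only
   uses (&&) and no addition. *)
From mathcomp Require Import all_boot all_order all_algebra.
Set Implicit Arguments. Unset Strict Implicit. Unset Printing Implicit Defensive.

(* Index arithmetic: a row index r < m * p of A (x) B corresponds to the pair
   (r %/ p, r %% p), i.e. the standard row-major Kronecker indexing
   (A (x) B)[i*p + k, j*p + l] = A[i,j] * B[k,l]. *)
Lemma kron_div_lt m p (r : 'I_(m * p)) : r %/ p < m.
Proof.
have rp : (nat_of_ord r < m * p)%N := ltn_ord r; move: (nat_of_ord r) rp => k rp.
have p0 : 0 < p by rewrite lt0n; apply/eqP=> p0; rewrite p0 muln0 in rp.
by rewrite ltn_divLR // ; apply: (leq_trans rp); rewrite leqnn.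
Qed.

Lemma kron_mod_lt m p (r : 'I_(m * p)) : r %% p < p.
Proof.
have rp : (nat_of_ord r < m * p)%N := ltn_ord r; move: (nat_of_ord r) rp => k rp.
have p0 : 0 < p by rewrite lt0n; apply/eqP=> p0; rewrite p0 muln0 in rp.
by rewrite ltn_mod.
Qed.

Definition kron_hi m p (r : 'I_(m * p)) : 'I_m := Ordinal (kron_div_lt r).
Definition kron_lo m p (r : 'I_(m * p)) : 'I_p := Ordinal (kron_mod_lt r).

Definition bkron m p (A : 'M[bool]_m) (B : 'M[bool]_p) : 'M[bool]_(m * p) :=
  \matrix_(r, c) (A (kron_hi r) (kron_hi c) && B (kron_lo r) (kron_lo c)).

Record bmx := BMx { bdim : nat; bmat : 'M[bool]_bdim }.

Fixpoint bkronL (s : seq bmx) : bmx :=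
  match s with
  | [::] => BMx (const_mx true : 'M[bool]_1)
  | X :: s' => BMx (bkron (bmat X) (bmat (bkronL s')))
  end.

(* A nonzero entry A (i0, j0) of A and B (k0, l0) of B determine both factors of
   the Boolean Kronecker product A (x) B: A (i, j) is its entry at
   ((i, k0), (j, l0)) and B (k, l) its entry at ((i0, k), (j0, l)).  Peeling
   off the first factor of A_1 (x) ... (x) A_l and inducting on l gives the
   uniqueness of all factors. *)
From mathcomp Require Import all_boot all_order all_algebra.
From Stdlib Require Import Eqdep_dec.
Set Implicit Arguments. Unset Strict Implicit.

Lemma kron_index_lt m p (i : 'I_m) (k : 'I_p) : i * p + k < m * p.
Proof.
apply: (@leq_trans (i.+1 * p)); first by rewrite mulSn addnC ltn_add2r.
by rewrite leq_mul2r ltn_ord orbT.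
Qed.

Definition kron_index m p (i : 'I_m) (k : 'I_p) : 'I_(m * p) :=
  Ordinal (kron_index_lt i k).

Lemma kron_hi_index m p (i : 'I_m) (k : 'I_p) : kron_hi (kron_index i k) = i.
Proof.
apply: val_inj => /=.
by rewrite divnMDl ?(leq_ltn_trans (leq0n k)) // divn_small // addn0.
Qed.

Lemma kron_lo_index m p (i : 'I_m) (k : 'I_p) : kron_lo (kron_index i k) = k.
Proof. by apply: val_inj; rewrite /= modnMDl modn_small. Qed.

Lemma bkron_index m p (A : 'M[bool]_m) (B : 'M[bool]_p) i j k l :
  bkron A B (kron_index i k) (kron_index j l) = A i j && B k l.
Proof. by rewrite mxE !kron_hi_index !kron_lo_index. Qed.

Lemma bmx_neq0P m n (M : 'M[bool]_(m, n)) :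
  reflect (exists i j, M i j) (M != const_mx false).
Proof.
apply: (iffP idP) => [nzM | [i [j Mij]]].
  case: (pickP (fun ij : 'I_m * 'I_n => M ij.1 ij.2)) => [[i j] Mij | noM].
    by exists i, j.
  by case/eqP: nzM; apply/matrixP => i j; rewrite mxE; apply: noM (i, j).
by apply: contraTneq Mij => ->; rewrite mxE.
Qed.

Lemma bkron_neq0r m p (A : 'M[bool]_m) (B : 'M[bool]_p) :
  bkron A B != const_mx false -> B != const_mx false.
Proof.
case/bmx_neq0P=> r [c]; rewrite mxE => /andP[_ Bcr].
by apply/bmx_neq0P; exists (kron_lo r), (kron_lo c).
Qed.

Lemma bkron_inj m p (A1 A2 : 'M[bool]_m) (B1 B2 : 'M[bool]_p) :
  bkron A1 B1 = bkron A2 B2 -> bkron A1 B1 != const_mx false ->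
  A1 = A2 /\ B1 = B2.
Proof.
move=> E /bmx_neq0P[r [c]]; rewrite mxE => /andP[A1rc B1rc].
have Eidx i j k l : A1 i j && B1 k l = A2 i j && B2 k l.
  by rewrite -!bkron_index E.
have /andP[A2rc B2rc] : A2 (kron_hi r) (kron_hi c) && B2 (kron_lo r) (kron_lo c).
  by rewrite -Eidx A1rc.
split; apply/matrixP => i j.
  by have := Eidx i j (kron_lo r) (kron_lo c); rewrite B1rc B2rc !andbT.
by have := Eidx (kron_hi r) (kron_hi c) i j; rewrite A1rc A2rc.
Qed.

Lemma BMx_inj d (M N : 'M[bool]_d) : BMx M = BMx N -> M = N.
Proof. move=> E; injection E; exact: inj_pair2_eq_dec (@eq_comparable nat) _ _ _ _. Qed.

Lemma bdim_bkronL s : bdim (bkronL s) = \prod_(d <- map bdim s) d.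
Proof. by elim: s => [|X s IHs] /=; rewrite ?big_nil ?big_cons ?IHs. Qed.

Lemma bkronL_inj (As Bs : seq bmx) :
  map bdim As = map bdim Bs -> bkronL As = bkronL Bs ->
  bmat (bkronL As) != const_mx false -> As = Bs.
Proof.
elim: As Bs => [|[d M] As IHAs] [|[d' N] Bs] //= [ed dimsE]; subst d'.
have dimE : bdim (bkronL As) = bdim (bkronL Bs) by rewrite !bdim_bkronL dimsE.
move: (IHAs Bs dimsE) dimE.
case: (bkronL As) => [e MAs]; case: (bkronL Bs) => [e' MBs] /= IH ee'; subst e'.
move=> /BMx_inj E nz; have [<- EAsBs] := bkron_inj E nz; subst MBs.
by rewrite IH //; apply: bkron_neq0r nz.
Qed.

Theorem lemma1 (ns : seq nat) (n : nat) (A : 'M[bool]_n)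
    (As Ahs : seq bmx) :
  \prod_(ni <- ns) ni = n ->
  A != const_mx false ->
  map bdim As = ns ->
  map bdim Ahs = ns ->
  bkronL As = BMx A ->
  bkronL Ahs = BMx A ->
  Ahs = As.
Proof.
move=> _ nzA dimsA dimsAh EA EAh.
by apply/esym/bkronL_inj; rewrite ?dimsA ?dimsAh ?EA ?EAh.
Qed.
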